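(* Let $M\cong\mathbb Z^d$, $\Sigma$, $v_1,\ldots,v_n$, $\mathcal A$, $D_0$, $\bar M$, $\mathbf v_0,\ldots,\mathbf v_n$, $K$ and $\Psi_{\mathbf p}$ be as in the context, with $\mathbb P_\Sigma$ nef-Fano. Then for every $\mathbf p\in K\cap\bar M$ and every $j\in\{0,1,\ldots,n\}$, $$D_j\Psi_{\mathbf p}=a_j\Psi_{\mathbf p+\mathbf v_j}$$ as formal Laurent series in $a_1,\ldots,a_n$ with coefficients in $\mathcal A$ (where $a_0=1$).
   Context: $M\cong\mathbb Z^d$ is a lattice with dual $N$; $\Sigma$ is a complete simplicial fan in $M_{\mathbb R}$ with minimal ray generators $v_1,\ldots,v_n$; $\mathbb P_\Sigma$ is assumed nef-Fano (anticanonical divisor nef); in particular every $v_i$ lies on the boundary of $\Delta=\mathrm{conv}(v_1,\ldots,v_n)$. For $k\ge0$, $A_k$ is the quotient of $\mathbb C[D_1,\ldots,D_n]$ by the linear elements $\sum_i(\lambda\cdot v_i)D_i$ ($\lambda\in N$) and the monomials $\prod_iD_i^{r_i}$ such that no cone of $\Sigma$ contains all $v_i$ with $r_i>k$. Multiplication by $\prod_iD_i^l$ defines $\mathbb C[D_1,\ldots,D_n]$-module maps $A_k\to A_{k+l}$, and $\mathcal A$ is the direct limit of the $A_k$ under these maps (a $\mathbb C[D_1,\ldots,D_n]$-module). Put $D_0=-\sum_{i=1}^nD_i$. Let $\bar M=M\oplus\mathbb Z$, $\mathbf v_i=v_i\oplus1$ for $1\le i\le n$, $\mathbf v_0=\mathbf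 0\oplus1$, and $K\subset\bar M_{\mathbb R}$ the cone spanned by $\mathbf v_0,\ldots,\mathbf v_n$. For $\beta=(b_0,\ldots,b_n)\in\mathbb Z^{n+1}$ with $b_0\le0$, the Morrison–Plesser class $\Phi_\beta\in\mathcal A$ is the image of $D_0^{-b_0}\prod_{i=1}^nD_i^{k-b_i}\in A_k$ for any $k\ge\max_i b_i$ (independent of $k$). For $\mathbf p\in K\cap\bar M$, $$\Psi_{\mathbf p}=\sum_{\beta:\ \sum_{i=0}^nb_i\mathbf v_i=-\mathbf p,\ b_0\le0}\Phi_\beta\prod_{i=1}^na_i^{b_i},$$ a formal Laurent series in the variables $a_1,\ldots,a_n$ with coefficients in $\mathcal A$; $D_j$ acts coefficientwise. *)

From HB Require Import structures.
From mathcomp Require Import all_boot all_order all_algebra.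
From mathcomp Require Import Rstruct.
From mathcomp Require Import complex.
From mathcomp Require Import mpoly.
Set Implicit Arguments.
Unset Strict Implicit.
Unset Printing Implicit Defensive.
Import Order.TTheory GRing.Theory Num.Theory.
Local Open Scope ring_scope.

Notation Real := Rdefinitions.R.
Definition Cplx : fieldType := complex Real.

(* A cone of the simplicial fan is encoded by the set S of indices of   *)
(* its ray generators; its support is cone{v_i : i in S} in M_R = R^d.  *)

Definition in_cone (d n : nat) (v : 'I_n -> 'I_d -> int) (S : {set 'I_n})
    (x : 'I_d -> Real) : Prop :=
  exists c : 'I_n -> Real, (forall i, 0 <= c i) /\
    forall k, x k = \sum_(i in S) c i * (v i k)%:~R.

Definition vR (d n : nat) (v : 'I_n -> 'I_d -> int) (i : 'I_n) : 'I_d -> Real :=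
  fun k => (v i k)%:~R.

Definition lin_indep (d n : nat) (v : 'I_n -> 'I_d -> int) (S : {set 'I_n}) : Prop :=
  forall c : 'I_n -> Real,
    (forall k, \sum_(i in S) c i * (v i k)%:~R = 0) -> forall i, i \in S -> c i = 0.

Definition primitive_vec (d : nat) (w : 'I_d -> int) : Prop :=
  forall (m : nat) (u : 'I_d -> int), (forall k, w k = m%:Z * u k) -> m = 1%N.

Definition complete_simplicial_fan (d n : nat) (v : 'I_n -> 'I_d -> int)
    (Sig : {set {set 'I_n}}) : Prop :=
  [/\
      forall S, S \in Sig -> lin_indep v S,
      (* closed under taking faces (faces of a simplicial cone = subsets) *)
      forall S T : {set 'I_n}, S \in Sig -> T \subset S -> T \in Sig,
      (* two cones meet in a common face *)
      forall (S T : {set 'I_n}) x, S \in Sig -> T \in Sig ->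
        in_cone v S x -> in_cone v T x -> in_cone v (S :&: T) x,
      ((forall i, [set i] \in Sig) /\ (forall i, primitive_vec (v i)))
    &
      forall x : 'I_d -> Real, exists2 S, S \in Sig & in_cone v S x].

(* P_Sigma is nef-Fano: the anticanonical divisor -K = sum_i D_i is nef,
   i.e. its support function (linear on each cone, equal to -1 at each
   v_i) is convex: for every cone sigma there is m_sigma in N_R with
   <m_sigma, v_i> = -1 for v_i in sigma and <m_sigma, v_j> >= -1 for all j. *)
Definition nef_Fano (d n : nat) (v : 'I_n -> 'I_d -> int)
    (Sig : {set {set 'I_n}}) : Prop :=
  forall S, S \in Sig -> exists m : 'I_d -> Real,
    (forall i, i \in S -> \sum_(k < d) m k * (v i k)%:~R = -1) /\
    (forall j, -1 <= \sum_(k < d) m k * (v j k)%:~R).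

Notation Poly n := {mpoly Cplx[n]}.

Definition monom (n : nat) (r : 'I_n -> nat) : Poly n :=
  \prod_(i < n) 'X_i ^+ r i.

Definition Dall (n : nat) : Poly n := \prod_(i < n) 'X_i.

Definition lin_elt (d n : nat) (v : 'I_n -> 'I_d -> int) (lam : 'I_d -> int)
    : Poly n :=
  \sum_(i < n) ((\sum_(k < d) lam k * v i k)%:~R * 'X_i).

(* generators of the ideal defining A_k *)
Definition gen_k (d n : nat) (v : 'I_n -> 'I_d -> int) (Sig : {set {set 'I_n}})
    (k : nat) (f : Poly n) : Prop :=
  (exists lam : 'I_d -> int, f = lin_elt v lam) \/
  (exists r : 'I_n -> nat, f = monom r /\
     ~ (exists2 S, S \in Sig & forall i, (k < r i)%N -> in_cone v S (vR v i))).

Definition in_ideal (n : nat) (G : Poly n -> Prop) (f : Poly n) : Prop :=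
  exists s : seq (Poly n * Poly n),
    (forall x, x \in s -> G x.2) /\ f = \sum_(x <- s) x.1 * x.2.

(* An element of the direct limit 𝒜 = lim A_k is represented by a pair
   (k, f): the image in 𝒜 of the class of f in A_k.  Two representatives
   are equal in 𝒜 iff their images agree in some A_m, m >= k, l, under
   the maps A_k -> A_m given by multiplication by prod_i D_i^{m-k}. *)
Definition Arep (n : nat) := (nat * Poly n)%type.

Definition Aeq (d n : nat) (v : 'I_n -> 'I_d -> int) (Sig : {set {set 'I_n}})
    (x y : Arep n) : Prop :=
  exists m : nat, [/\ (x.1 <= m)%N, (y.1 <= m)%N &
    in_ideal (gen_k v Sig m)
      (x.2 * Dall n ^+ (m - x.1) - y.2 * Dall n ^+ (m - y.1))].

Definition Azero (n : nat) : Arep n := (0%N, 0).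

Definition D0 (n : nat) : Poly n := - \sum_(i < n) 'X_i.

(* D_j for j in {0,...,n}, encoded as j : 'I_n.+1 (j = 0 is D_0,
   j = lift ord0 i is D_{i+1} = 'X_i) *)
Definition Dvar (n : nat) (j : 'I_n.+1) : Poly n :=
  oapp (fun i => 'X_i) (D0 n) (unlift ord0 j).

Definition Dact (n : nat) (j : 'I_n.+1) (x : Arep n) : Arep n :=
  (x.1, Dvar j * x.2).

(* Morrison-Plesser class Phi_beta, beta = (b0, b), b0 <= 0: the image of
   D_0^{-b0} prod_i D_i^{k - b_i} in A_k, with k = max_i |b_i| >= max_i b_i. *)
Definition Phi (n : nat) (b0 : int) (b : 'I_n -> int) : Arep n :=
  let k := (\max_(i < n) `|b i|)%N in
  (k, D0 n ^+ `|b0| * \prod_(i < n) 'X_i ^+ `|k%:Z - b i|).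

(* A point p of Mbar = M (+) Z is a pair (pM, pz). *)
(* p lies in K = cone(vbar_0, ..., vbar_n), vbar_0 = (0,1), vbar_i = (v_i,1) *)
Definition in_K (d n : nat) (v : 'I_n -> 'I_d -> int) (pM : 'I_d -> int)
    (pz : int) : Prop :=
  exists (c0 : Real) (c : 'I_n -> Real), 0 <= c0 /\ (forall i, 0 <= c i) /\
    (forall k, (pM k)%:~R = \sum_(i < n) c i * (v i k)%:~R) /\
    pz%:~R = c0 + \sum_(i < n) c i.

(* Psi_p is the formal Laurent series sum_beta Phi_beta a^b; its
   coefficient at the monomial prod_i a_i^{b_i} (b : 'I_n -> int) is
   Phi_beta for the unique beta = (b0, b) with sum_i b_i vbar_i = -p,
   provided it exists and has b0 <= 0, and 0 otherwise. *)
Definition Psi_coef (d n : nat) (v : 'I_n -> 'I_d -> int) (pM : 'I_d -> int)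
    (pz : int) (b : 'I_n -> int) : Arep n :=
  let b0 := - pz - \sum_(i < n) b i in
  if [forall k : 'I_d, \sum_(i < n) b i * v i k == - pM k] && (b0 <= 0)
  then Phi b0 b else Azero n.

(* M-component of vbar_j *)
Definition vbarM (d n : nat) (v : 'I_n -> 'I_d -> int) (j : 'I_n.+1) : 'I_d -> int :=
  fun k => oapp (fun i => v i k) 0 (unlift ord0 j).

(* coefficients of a_j * F at b are those of F at b - e_j (a_0 = 1) *)
Definition shift_exp (n : nat) (j : 'I_n.+1) (b : 'I_n -> int) : 'I_n -> int :=
  fun i => if unlift ord0 j == Some i then b i - 1 else b i.

(* For j >= 1, multiplying the representative prod_i D_i^(k - b_i) of Phi_beta
   by D_j lowers b_j by one, which is exactly the coefficient shift of
   a_j Psi_(p + vbar_j).  For j = 0, D_0 Phi_(b0,b) = Phi_(b0-1,b) while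
   b0 <= 0.  In the remaining case b0 = 1 the left coefficient vanishes and
   the right one is Phi_(0,b); it is zero in the limit because its monomial
   prod_i D_i^(k - b_i) exceeds k exactly at the i with b_i < 0, and no cone
   contains all those v_i: if S did, the nef-Fano functional m_S (equal to -1
   on S, >= -1 on every v_i) would give <m_S, p> <= sum_i b_i = -p_z - 1 from
   p = -sum_i b_i v_i, whereas p in K gives <m_S, p> >= -p_z. *)
From HB Require Import structures.
From mathcomp Require Import all_boot all_order all_algebra.
From mathcomp Require Import Rstruct complex mpoly.
From mathcomp Require Import zify ring lra.
From Stdlib Require Import FunctionalExtensionality.
Set Implicit Arguments.
Unset Strict Implicit.
Unset Printing Implicit Defensive.
Import Order.TTheory GRing.Theory Num.Theory.
Local Open Scope ring_scope.

Section FanGeometry.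
Variables (d n : nat) (v : 'I_n -> 'I_d -> int) (Sig : {set {set 'I_n}}).

Lemma in_cone_ray (i : 'I_n) : in_cone v [set i] (vR v i).
Proof.
exists (fun l => (l == i)%:R); split=> [l|k]; first exact: ler0n.
by rewrite big_set1 eqxx mul1r.
Qed.

(* Primitivity rules out v_i = 0, which would lie in every cone. *)
Lemma ray_in_cone_mem (S : {set 'I_n}) (i : 'I_n) :
  complete_simplicial_fan v Sig -> S \in Sig -> in_cone v S (vR v i) -> i \in S.
Proof.
move=> [_ _ meet [ray primitive] _] SSig iS; apply/contraT => iNS.
have SIi : S :&: [set i] = set0.
  by apply/setP => l; rewrite !inE; apply/andP => -[lS /eqP li]; rewrite -li lS in iNS.
have [c [_]] := meet _ _ _ SSig (ray i) iS (in_cone_ray i).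
rewrite SIi => vi0.
suff : (0 = 1)%N by [].
apply: (primitive i 0%N (fun _ => 0)) => k.
by move: (vi0 k); rewrite big_set0 /vR => /eqP; rewrite intr_eq0 => /eqP ->.
Qed.

Definition pairing (m x : 'I_d -> Real) : Real := \sum_(k < d) m k * x k.

Lemma pairing_sum (m : 'I_d -> Real) (c : 'I_n -> Real) :
  pairing m (fun k => \sum_(i < n) c i * vR v i k)
  = \sum_(i < n) c i * pairing m (vR v i).
Proof.
rewrite /pairing; under eq_bigr do rewrite mulr_sumr.
rewrite exchange_big /=; apply: eq_bigr => i _; rewrite mulr_sumr.
by apply: eq_bigr => k _; rewrite mulrCA.
Qed.

Variables (m : 'I_d -> Real) (pM : 'I_d -> int) (pz : int).
Hypothesis m_ge : forall i, -1 <= pairing m (vR v i).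

Lemma pairing_in_K_ge :
  in_K v pM pz -> - pz%:~R <= pairing m (fun k => (pM k)%:~R).
Proof.
case=> c0 [c [c0_ge0 [c_ge0 [pME pzE]]]].
have -> : pairing m (fun k => (pM k)%:~R)
          = pairing m (fun k => \sum_(i < n) c i * vR v i k).
  by apply: eq_bigr => k _; rewrite pME.
rewrite pairing_sum pzE opprD.
have : - \sum_(i < n) c i <= \sum_(i < n) c i * pairing m (vR v i).
  rewrite -sumrN; apply: ler_sum => i _.
  by have := c_ge0 i; have := m_ge i; nra.
lra.
Qed.

Lemma pairing_le_sum_exps (b : 'I_n -> int) :
  (forall k, \sum_(i < n) b i * v i k = - pM k) ->
  (forall i, b i < 0 -> pairing m (vR v i) = -1) ->
  pairing m (fun k => (pM k)%:~R) <= (\sum_(i < n) b i)%:~R.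
Proof.
move=> pME neg_tight.
have pMR k : (pM k)%:~R = - \sum_(i < n) (b i)%:~R * vR v i k :> Real.
  by rewrite -[pM k]opprK -pME rmorphN rmorph_sum; under eq_bigr do rewrite rmorphM.
have -> : pairing m (fun k => (pM k)%:~R)
          = - pairing m (fun k => \sum_(i < n) (b i)%:~R * vR v i k).
  by rewrite -sumrN; apply: eq_bigr => k _; rewrite pMR mulrN.
rewrite pairing_sum rmorph_sum lerNl -sumrN.
apply: ler_sum => i _; case: (ltP (b i) 0) => [/neg_tight -> | b_ge0].
  by rewrite mulrN1.
have := m_ge i; have : 0 <= (b i)%:~R :> Real by rewrite ler0z.
nra.
Qed.

End FanGeometry.

Lemma no_cone_contains_negative_rays (d n : nat) (v : 'I_n -> 'I_d -> int)
    (Sig : {set {set 'I_n}}) (pM : 'I_d -> int) (pz : int) (b : 'I_n -> int) :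
  complete_simplicial_fan v Sig -> nef_Fano v Sig -> in_K v pM pz ->
  (forall k, \sum_(i < n) b i * v i k = - pM k) -> \sum_(i < n) b i + pz < 0 ->
  ~ exists2 S, S \in Sig & forall i, b i < 0 -> in_cone v S (vR v i).
Proof.
move=> fan nef pK pME b0_gt0 [S SSig neg_in_S].
have [m [m_S m_ge]] := nef S SSig.
have neg_tight i : b i < 0 -> pairing m (vR v i) = -1.
  by move=> /neg_in_S /(ray_in_cone_mem fan SSig); apply: m_S.
have := pairing_in_K_ge m_ge pK; have := pairing_le_sum_exps m_ge pME neg_tight.
by move: b0_gt0; rewrite -(ltrz0 Real) rmorphD; lra.
Qed.

Lemma monomD (n : nat) (r s : 'I_n -> nat) :
  monom r * monom s = monom (fun i => (r i + s i)%N).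
Proof. by rewrite /monom -big_split; apply: eq_bigr => i _; rewrite exprD. Qed.

Lemma expr_Dall (n p : nat) : Dall n ^+ p = monom (fun _ : 'I_n => p).
Proof. by rewrite /Dall /monom prodrXl. Qed.

Lemma mulX_monom (n : nat) (i : 'I_n) (r : 'I_n -> nat) :
  'X_i * monom r = monom (fun l => (r l + (i == l))%N).
Proof.
rewrite /monom (bigD1 i) //= [RHS](bigD1 i) //= eqxx addn1 exprS mulrA.
congr (_ * _); apply: eq_bigr => l /negbTE il.
by rewrite eq_sym il addn0.
Qed.

Lemma Dact_Azero (n : nat) (j : 'I_n.+1) : Dact j (Azero n) = Azero n.
Proof. by rewrite /Dact mulr0. Qed.

Lemma PhiE (n : nat) (b0 : int) (b : 'I_n -> int) :
  let K := (\max_(i < n) `|b i|)%N in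
  Phi b0 b = (K, D0 n ^+ `|b0| * monom (fun i => `|K%:Z - b i|%N)).
Proof. by []. Qed.

Lemma Dact0_Phi (n : nat) (b0 : int) (b : 'I_n -> int) :
  b0 <= 0 -> Dact ord0 (Phi b0 b) = Phi (b0 - 1) b.
Proof.
move=> b0_le0; rewrite /Dact /Dvar unlift_none /= !PhiE /= mulrA -exprS.
by have -> : `|b0 - 1|%N = `|b0|.+1 by lia.
Qed.

Section DirectLimit.
Variables (d n : nat) (v : 'I_n -> 'I_d -> int) (Sig : {set {set 'I_n}}).

Lemma Aeq_pad (x y : Arep n) (m : nat) : (x.1 <= m)%N -> (y.1 <= m)%N ->
  x.2 * Dall n ^+ (m - x.1) = y.2 * Dall n ^+ (m - y.1) -> Aeq v Sig x y.
Proof.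
move=> x_le y_le xy; exists m; split=> //; rewrite xy subrr.
by exists [::]; rewrite big_nil.
Qed.

Lemma Aeq_refl (x : Arep n) : Aeq v Sig x x.
Proof. exact: Aeq_pad. Qed.

Lemma Aeq0_monom (k : nat) (r : 'I_n -> nat) :
  ~ (exists2 S, S \in Sig & forall i, (k < r i)%N -> in_cone v S (vR v i)) ->
  Aeq v Sig (Azero n) (k, monom r).
Proof.
move=> no_cone; exists k; split=> //=.
rewrite mul0r subnn expr0 mulr1 sub0r.
exists [:: (-1, monom r)]; rewrite big_seq1 mulN1r; split=> // x.
by rewrite inE => /eqP -> /=; right; exists r.
Qed.

Lemma Aeq0_Phi0 (b : 'I_n -> int) :
  ~ (exists2 S, S \in Sig & forall i, b i < 0 -> in_cone v S (vR v i)) ->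
  Aeq v Sig (Azero n) (Phi 0 b).
Proof.
move=> no_cone; rewrite PhiE expr0 mul1r; apply: Aeq0_monom => -[S SSig cover].
by apply: no_cone; exists S => // i bi_lt0; apply: cover; lia.
Qed.

Lemma Dact_lift_Phi (i : 'I_n) (b0 : int) (b : 'I_n -> int) :
  Aeq v Sig (Dact (lift ord0 i) (Phi b0 b)) (Phi b0 (shift_exp (lift ord0 i) b)).
Proof.
set b' := shift_exp _ b; rewrite /Dact /Dvar liftK !PhiE /=.
set K := (\max_(l < n) _)%N; set K' := (\max_(l < n) _)%N.
apply: (Aeq_pad (m := maxn K K')); [exact: leq_maxl | exact: leq_maxr |] => /=.
rewrite mulrCA -!mulrA; congr (_ * _).
rewrite mulrA mulX_monom !expr_Dall !monomD; congr monom.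
apply: functional_extensionality => l.
have bK : (`|b l| <= K)%N := leq_bigmax l; have : (`|b' l| <= K')%N := leq_bigmax l.
rewrite /b' /shift_exp liftK (inj_eq (@Some_inj _)); case: eqVneq bK => [<-|_]; lia.
Qed.

End DirectLimit.

Lemma sum_shift_exp (n : nat) (j : 'I_n.+1) (b w : 'I_n -> int) :
  \sum_(l < n) shift_exp j b l * w l
  = \sum_(l < n) b l * w l - oapp w 0 (unlift ord0 j).
Proof.
rewrite /shift_exp; case: (unlift ord0 j) => [i|]; last by rewrite subr0.
rewrite (bigD1 i) // [in RHS](bigD1 i) //= eqxx mulrBl mul1r addrAC.
congr (_ + _ - _); apply: eq_bigr => l /negbTE il.
by rewrite (inj_eq (@Some_inj _)) eq_sym il.
Qed.

Lemma sumr_shift_exp (n : nat) (j : 'I_n.+1) (b : 'I_n -> int) :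
  \sum_(l < n) shift_exp j b l = \sum_(l < n) b l - (j != ord0)%:R.
Proof.
under eq_bigr do rewrite -[shift_exp j b _]mulr1.
rewrite sum_shift_exp; under eq_bigr do rewrite mulr1.
by case: unliftP => [i ->|->]; rewrite ?liftK ?unlift_none //= eq_sym neq_lift.
Qed.

Lemma shift_exp0 (n : nat) (b : 'I_n -> int) : shift_exp ord0 b = b.
Proof. by apply: functional_extensionality => l; rewrite /shift_exp unlift_none. Qed.

(* The M-part of the shift is absorbed by b; the Z-part (vbar_j has last
   coordinate 1) too, except for j = 0 where a_0 = 1 leaves b alone and b0
   drops by one. *)
Lemma Psi_coef_shift (d n : nat) (v : 'I_n -> 'I_d -> int) (pM : 'I_d -> int)
    (pz : int) (j : 'I_n.+1) (b : 'I_n -> int) :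
  let b0 := - pz - \sum_(i < n) b i - (j == ord0)%:R in
  Psi_coef v (fun k => pM k + vbarM v j k) (pz + 1) (shift_exp j b) =
  if [forall k, \sum_(i < n) b i * v i k == - pM k] && (b0 <= 0)
  then Phi b0 (shift_exp j b) else Azero n.
Proof.
rewrite /Psi_coef /= sumr_shift_exp.
have -> : - (pz + 1) - (\sum_(i < n) b i - (j != ord0)%:R)
          = - pz - \sum_(i < n) b i - (j == ord0)%:R.
  by case: eqP => _ /=; ring.
congr (if _ && _ then _ else _); apply: eq_forallb => k.
by rewrite (sum_shift_exp j b (fun i => v i k)) opprD (can_eq (addrK _)).
Qed.

Lemma Dact_lift_Psi_coef (d n : nat) (v : 'I_n -> 'I_d -> int)
    (Sig : {set {set 'I_n}}) (pM : 'I_d -> int) (pz : int) (i : 'I_n)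
    (b : 'I_n -> int) :
  Aeq v Sig (Dact (lift ord0 i) (Psi_coef v pM pz b))
    (Psi_coef v (fun k => pM k + vbarM v (lift ord0 i) k) (pz + 1)
       (shift_exp (lift ord0 i) b)).
Proof.
rewrite Psi_coef_shift /= subr0 /Psi_coef /=.
case: ifP => _; first exact: Dact_lift_Phi.
by rewrite Dact_Azero; apply: Aeq_refl.
Qed.

Lemma Dact0_Psi_coef (d n : nat) (v : 'I_n -> 'I_d -> int)
    (Sig : {set {set 'I_n}}) (pM : 'I_d -> int) (pz : int) (b : 'I_n -> int) :
  complete_simplicial_fan v Sig -> nef_Fano v Sig -> in_K v pM pz ->
  Aeq v Sig (Dact ord0 (Psi_coef v pM pz b))
    (Psi_coef v (fun k => pM k + vbarM v ord0 k) (pz + 1) (shift_exp ord0 b)).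
Proof.
move=> fan nef pK; rewrite Psi_coef_shift /= shift_exp0 /Psi_coef /=.
set b0 := - pz - _.
case: (boolP [forall k, _]) => [/forallP pME | _] /=; last first.
  by rewrite Dact_Azero; apply: Aeq_refl.
have [b0_le0 | b0_gt0] := lerP b0 0.
  by rewrite Dact0_Phi // ifT; [apply: Aeq_refl | lia].
rewrite Dact_Azero; case: ifP => [b0_le1 | _]; last exact: Aeq_refl.
have -> : b0 - 1 = 0 by lia.
apply/Aeq0_Phi0/(no_cone_contains_negative_rays fan nef pK) => [k | ].
  exact/eqP.
by rewrite -oppr_gt0 opprD addrC.
Qed.

Theorem proposition3p4 (d n : nat) (v : 'I_n -> 'I_d -> int)
    (Sig : {set {set 'I_n}}) :
  complete_simplicial_fan v Sig -> nef_Fano v Sig ->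
  forall (pM : 'I_d -> int) (pz : int), in_K v pM pz ->
  forall (j : 'I_n.+1) (b : 'I_n -> int),
    Aeq v Sig (Dact j (Psi_coef v pM pz b))
      (Psi_coef v (fun k => pM k + vbarM v j k) (pz + 1) (shift_exp j b)).
Proof.
move=> fan nef pM pz pK j b.
case: (unliftP ord0 j) => [i ->|->].
  exact: Dact_lift_Psi_coef.
exact: Dact0_Psi_coef.
Qed.
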